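(* Let $n\ge1$ and let $G$ be a canonical weighted voting game on players $\{1,\dots,n\}$ whose set $W_{\min,G}$ of minimal winning coalitions is nonempty. Then there exist a coalition $C\in W_{\min,G}$ and a canonical weighted voting game $G'$ on players $\{1,\dots,n\}$ whose set of minimal winning coalitions is exactly $W_{\min,G}\setminus\{C\}$.
   Context: A simple game on $N=\{1,\dots,n\}$ is a function $v:2^N\to\{0,1\}$ (the all-losing game is allowed); $S$ is winning if $v(S)=1$. A minimal winning coalition is a winning coalition all of whose sets $S\setminus\{i\}$, $i\in S$, are losing. A weighted voting game is a simple game for which there exist $q\ge0$, $w_1,\dots,w_n\ge0$ with $v(S)=1\iff\sum_{i\in S}w_i\ge q$. Write $i\succeq j$ if $v(S\cup\{i\})\ge v(S\cup\{j\})$ for all $S\subseteq N\setminus\{i,j\}$. A canonical weighted voting game is a weighted voting game with $1\succeq2\succeq\cdots\succeq n$. *)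

From mathcomp Require Import all_boot all_order all_algebra.
From mathcomp Require Import Rstruct.
From Stdlib Require Import Reals.
Set Implicit Arguments. Unset Strict Implicit. Unset Printing Implicit Defensive.
Import Order.TTheory GRing.Theory Num.Theory.
Local Open Scope ring_scope.

(* Players {1,...,n} are represented by 'I_n = {0,...,n-1}; player i+1 of the
   paper is the ordinal i.  A simple game is any map from coalitions to bool. *)
Definition simple_game (n : nat) := {set 'I_n} -> bool.

Definition minimal_winning n (v : simple_game n) (S : {set 'I_n}) : bool :=
  v S && [forall i in S, ~~ v (S :\ i)].

Definition Wmin n (v : simple_game n) : {set {set 'I_n}} :=
  [set S | minimal_winning v S].

Definition weighted n (v : simple_game n) : Prop :=
  exists (q : R) (w : 'I_n -> R),
    0 <= q /\ (forall i, 0 <= w i) /\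
    forall S : {set 'I_n}, v S = (q <= \sum_(i in S) w i).

Definition desir n (v : simple_game n) (i j : 'I_n) : Prop :=
  forall S : {set 'I_n}, i \notin S -> j \notin S ->
    v (j |: S) -> v (i |: S).

Definition canonical_wvg n (v : simple_game n) : Prop :=
  weighted v /\
  forall i j : 'I_n, (nat_of_ord i).+1 = j -> desir v i j.

(* Take nonincreasing weights W and quota q for G, and let p be the last player
   occurring in a minimal winning coalition; players after p are dummies.  Among
   the coalitions C <= {1..p} in which p is pivotal, pick one of least weight and,
   among those, of largest index sum; it is minimal winning.  Now lower the weight
   of p by the excess W(C) - q plus a tiny eta, raise every other player in
   {1..p} outside C by eta, and zero out the dummies.  C becomes losing and every
   other winning coalition survives: it either exceeds W(C) by a full gap of the
   finitely many weight sums, or it has the same weight and then gains at least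
   one eta from a player outside C.  The tie-break by index sum is exactly what
   keeps the new weights nonincreasing, so the new game is again canonical. *)

From mathcomp Require Import all_boot all_order all_algebra all_fingroup.
From mathcomp Require Import Rstruct lra.
From Stdlib Require Rdefinitions.
Set Implicit Arguments. Unset Strict Implicit. Unset Printing Implicit Defensive.
Import Order.TTheory GRing.Theory Num.Theory.
Local Open Scope ring_scope.
Local Notation R := Rdefinitions.R.

Lemma exists_gap (T : finType) (f : T -> R) :
  exists2 g, 0 < g & forall x y, f x < f y -> f x + g <= f y.
Proof.
case: (pickP (fun xy : T * T => f xy.1 < f xy.2)) => [xy0 lt0 | none]; last first.
  by exists 1 => // x y lt_xy; have := none (x, y); rewrite /= lt_xy.
case: (arg_minP (fun xy : T * T => f xy.2 - f xy.1) (P := fun xy => f xy.1 < f xy.2) lt0).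
move=> -[x0 y0] /= lt_x0y0 min0.
exists (f y0 - f x0); first by rewrite subr_gt0.
by move=> x y /(min0 (x, y)) /= ?; lra.
Qed.

Section WeightSums.
Variable n : nat.
Implicit Types (S T : {set 'I_n}) (W : 'I_n -> R).

Definition wsum W S := \sum_(i in S) W i.

Definition weighted_by (v : simple_game n) q W := forall S, v S = (q <= wsum W S).

Definition nonincreasing_weights W := forall i j : 'I_n, (i <= j)%N -> W j <= W i.

Definition index_sum S := (\sum_(i in S) i)%N.

Lemma wsumU1 W i S : i \notin S -> wsum W (i |: S) = W i + wsum W S.
Proof. exact: big_setU1. Qed.

Lemma wsumD1 W i S : i \in S -> wsum W S = W i + wsum W (S :\ i).
Proof. exact: big_setD1. Qed.

Lemma wsum1 W i : wsum W [set i] = W i.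
Proof. exact: big_set1. Qed.

Lemma le_wsum W S T : (forall i, 0 <= W i) -> S \subset T -> wsum W S <= wsum W T.
Proof.
move=> W_ge0 /setIidPr sST; rewrite /wsum [X in _ <= X](big_setID S) /= sST.
by rewrite lerDl sumr_ge0.
Qed.

End WeightSums.

Section MonotoneGames.

Definition monotone_game n (v : simple_game n) :=
  forall S T : {set 'I_n}, S \subset T -> v S -> v T.

Variables (n : nat) (v : simple_game n).
Implicit Types (S T : {set 'I_n}) (M : {set {set 'I_n}}).

Lemma Wmin_winning S : S \in Wmin v -> v S.
Proof. by rewrite inE => /andP[]. Qed.

Lemma Wmin_below S : v S -> exists2 T, T \in Wmin v & T \subset S.
Proof.
move=> vS; have vSS : v S && (S \subset S) by rewrite vS subxx.
case: (arg_minnP (fun T => #|T|) (P := fun T => v T && (T \subset S)) vSS).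
move=> T /andP[vT sTS] minT.
exists T => //; rewrite inE /minimal_winning vT; apply/forall_inP => i iT.
apply/negP => vTi; have := minT (T :\ i); rewrite vTi (subset_trans (subD1set T i)) //.
by rewrite (cardsD1 i T) iT ltnn => /(_ isT).
Qed.

Hypothesis v_mono : monotone_game v.

Lemma Wmin_antichain S T : S \in Wmin v -> T \in Wmin v -> S \subset T -> S = T.
Proof.
move=> /Wmin_winning vS; rewrite inE => /andP[_ /forall_inP minT] sST.
apply/eqP; rewrite eqEsubset sST; apply/subsetP => i iT; apply/negPn/negP => iS.
by have /negP[] := minT i iT; apply: v_mono vS; rewrite subsetD1 sST.
Qed.

Lemma Wmin_set0 : v set0 -> Wmin v = [set set0].
Proof.
move=> v0; have W0 : set0 \in Wmin v.
  by rewrite inE /minimal_winning v0; apply/forall_inP => i; rewrite inE.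
apply/setP => S; rewrite in_set1; apply/idP/eqP => [SW | ->] //.
by apply/esym/Wmin_antichain; rewrite ?sub0set.
Qed.

Lemma Wmin_generated M (v' : simple_game n) : M \subset Wmin v ->
  (forall S, v' S = [exists T in M, T \subset S]) -> Wmin v' = M.
Proof.
move=> /subsetP MW v'E; apply/setP => S; rewrite inE /minimal_winning v'E.
apply/idP/idP => [/andP[/exists_inP[T TM sTS] /forall_inP minS] | SM].
  suff -> : S = T by [].
  apply/eqP; rewrite eq_sym eqEsubset sTS; apply/subsetP => i iS.
  apply/negPn/negP => iT; have /negP[] := minS i iS.
  by rewrite v'E; apply/exists_inP; exists T; rewrite // subsetD1 sTS.
have -> /= : [exists T in M, T \subset S] by apply/exists_inP; exists S.
apply/forall_inP => i iS; rewrite v'E; apply/exists_inP => -[T TM sTS].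
have sTS' : T \subset S := subset_trans sTS (subD1set S i).
have := subsetP sTS i; rewrite (Wmin_antichain (MW T TM) (MW S SM) sTS') iS.
by rewrite !inE eqxx => /(_ isT).
Qed.

End MonotoneGames.

Lemma sumD2 n (F : 'I_n -> R) i j : i != j ->
  \sum_k F k = F i + F j + \sum_(k | (k != i) && (k != j)) F k.
Proof.
move=> neq_ij; rewrite (bigD1 i) //= (bigD1 j) 1?eq_sym //= addrA.
by congr (_ + _); apply: eq_bigl => k; rewrite andbC.
Qed.

Lemma consecutive_nonincreasing n (W : 'I_n -> R) :
  (forall i j : 'I_n, i.+1 = j -> W j <= W i) -> nonincreasing_weights W.
Proof.
move=> Wsucc i j le_ij.
have [k jE] : exists k, nat_of_ord j = (i + k)%N by exists (j - i)%N; rewrite subnKC.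
elim: k j jE {le_ij} => [|k IH] j jE; first by rewrite addn0 in jE; rewrite (val_inj jE).
have lt_ik : (i + k < n)%N by rewrite -addnS -jE ltnW.
by apply: le_trans (Wsucc (Ordinal lt_ik) j _) (IH _ _) => //=; rewrite jE addnS.
Qed.

Section CanonicalWeights.
Variables (n : nat) (v : simple_game n).
Implicit Types (S : {set 'I_n}) (W : 'I_n -> R).

Lemma weighted_monotone q W :
  (forall i, 0 <= W i) -> weighted_by v q W -> monotone_game v.
Proof. by move=> W_ge0 vW S T sST; rewrite !vW => /le_trans; apply; apply: le_wsum. Qed.

Lemma desir_of_weights q W i j : weighted_by v q W -> W j <= W i -> desir v i j.
Proof.
by move=> vW le_ji S iS jS; rewrite !vW !wsumU1 // => /le_trans; apply; rewrite lerD2r.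
Qed.

Lemma desir_swap i j S : desir v i j -> desir v j i -> v (tperm i j @: S) = v S.
Proof.
move=> dij dji.
have memT k l x : (x \in tperm k l @: S) = (tperm k l x \in S).
  by rewrite (can_imset_pre _ (tpermK k l)) inE.
have [eq_ij | neq_ij] := eqVneq (i \in S) (j \in S).
  by congr v; apply/setP => x; rewrite memT; case: tpermP => [->|->|].
have swap_out k l : k \in S -> l \notin S -> tperm k l @: S = l |: (S :\ k).
  move=> kS lS; apply/setP => x; rewrite memT !inE.
  case: tpermP => [->|->|/eqP xk /eqP xl]; rewrite ?eqxx ?kS ?(negbTE lS) ?andbF //.
    by rewrite orbF; apply/esym/negbTE/eqP => kl; rewrite -kl kS in lS.
  by rewrite (negbTE xk) (negbTE xl).
have equiv (X : {set 'I_n}) : i \notin X -> j \notin X -> v (i |: X) = v (j |: X).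
  by move=> iX jX; apply/idP/idP; [apply: dji | apply: dij].
case: (boolP (i \in S)) neq_ij => iS; case: (boolP (j \in S)) => jS // _.
- rewrite swap_out // -equiv ?setD1K //; first by rewrite !inE eqxx.
  by rewrite !inE negb_and jS orbT.
- rewrite tpermC swap_out // equiv ?setD1K //; last by rewrite !inE eqxx.
  by rewrite !inE negb_and iS orbT.
Qed.

(* Among the relabellings of the weights that still represent v, take one of least cost;
   if a player i had less weight than its successor j, the two would be equally
   desirable, and exchanging their weights would lower the cost. *)
Lemma canonical_nonincreasing_weights : canonical_wvg v ->
  exists q W, [/\ 0 <= q, forall i, 0 <= W i, nonincreasing_weights W & weighted_by v q W].
Proof.
case=> -[q [w [q_ge0 [w_ge0 vw]]]] canon.
pose valid (s : {perm 'I_n}) := [forall S, v S == (q <= wsum (w \o s) S)].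
pose cost (s : {perm 'I_n}) := \sum_i w (s i) * (nat_of_ord i)%:R.
have valid1 : valid 1%g.
  apply/forallP => S; rewrite vw; apply/eqP; congr (_ <= _).
  by apply: eq_bigr => i; rewrite /= perm1.
case: (arg_minP cost (P := valid) valid1) => s /forallP valid_s min_s.
have vs : weighted_by v q (w \o s) by move=> S; apply/eqP/valid_s.
exists q, (w \o s); split=> // [i|]; first exact: w_ge0.
apply: consecutive_nonincreasing => i j ij.
rewrite leNgt; apply/negP => lt_ij.
have neq_ij : i != j by rewrite -val_eqE /= -ij ltn_eqF.
have valid_swap : valid (tperm i j * s)%g.
  apply/forallP => S; rewrite -(desir_swap S (canon i j ij) (desir_of_weights vs (ltW lt_ij))).
  rewrite vs /wsum big_imset /=; last by move=> x y _ _; apply: perm_inj.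
  by apply/eqP; congr (_ <= _); apply: eq_bigr => k _; rewrite permM.
have := min_s _ valid_swap; rewrite /cost (sumD2 _ neq_ij) [X in _ <= X](sumD2 _ neq_ij).
rewrite [in X in _ <= X](eq_bigr (fun k => w (s k) * (nat_of_ord k)%:R)); last first.
  by move=> k /andP[ki kj]; rewrite permM tpermD // eq_sym.
have -> : (nat_of_ord j)%:R = (nat_of_ord i)%:R + 1 :> R by rewrite -ij -addn1 natrD.
rewrite !permM tpermL tpermR /=; move: lt_ij => /= lt_ij; lra.
Qed.

End CanonicalWeights.

Section RemoveCoalition.
Variables (n : nat) (v : simple_game n) (q : R) (W : 'I_n -> R).
Hypotheses (q_ge0 : 0 <= q) (W_ge0 : forall i, 0 <= W i).
Hypotheses (W_noninc : nonincreasing_weights W) (vW : weighted_by v q W).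
Implicit Types (S T : {set 'I_n}).

Let v_mono : monotone_game v := weighted_monotone W_ge0 vW.

Variable p : 'I_n.
Let P := [set i : 'I_n | (i <= p)%N].
Hypothesis Wmin_sub_P : forall T, T \in Wmin v -> T \subset P.

Definition p_pivotal := [set S : {set 'I_n} | [&& S \subset P, p \in S, v S & ~~ v (S :\ p)]].

Variable C : {set 'I_n}.
Hypothesis C_pivotal : C \in p_pivotal.
Hypothesis C_min : forall S, S \in p_pivotal -> wsum W C <= wsum W S.
Hypothesis C_max : forall S, S \in p_pivotal ->
  wsum W S = wsum W C -> (index_sum S <= index_sum C)%N.

Lemma C_pivotalP : [/\ C \subset P, p \in C, v C & ~~ v (C :\ p)].
Proof. by move: C_pivotal; rewrite inE => /and4P. Qed.

Lemma W_p_gt0 : 0 < W p.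
Proof.
have [_ pC vC vCp] := C_pivotalP.
by move: vC vCp; rewrite !vW (wsumD1 W pC) -ltNge => ? ?; lra.
Qed.

Lemma pivotal_lightest_Wmin S :
  S \in p_pivotal -> wsum W S = wsum W C -> S \in Wmin v.
Proof.
rewrite inE => /and4P[sSP pS vS vSp] eq_SC.
rewrite inE /minimal_winning vS; apply/forall_inP => j jS.
have [->|jp] := eqVneq j p; first exact: vSp.
apply/negP => vSj; have SjU : S :\ j \in p_pivotal.
  rewrite inE (subset_trans (subD1set S j) sSP) !inE eq_sym jp pS vSj /=.
  apply: contra vSp => /v_mono; apply.
  by apply/subsetP => x; rewrite !inE => /and3P[-> _ ->].
have le_pj : W p <= W j by apply: W_noninc; have := subsetP sSP j jS; rewrite inE.
by have := C_min SjU; rewrite -eq_SC (wsumD1 W jS); have := W_p_gt0; lra.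
Qed.

Lemma C_Wmin : C \in Wmin v.
Proof. exact: pivotal_lightest_Wmin. Qed.

(* Otherwise C with i exchanged for j is pivotal, of the same weight and with a
   larger index sum. *)
Lemma C_tie_break (i j : 'I_n) : (i < j)%N -> j \in P -> j != p ->
  i \in C -> j \notin C -> W j < W i.
Proof.
move=> lt_ij jP jp iC jC; have [sCP pC vC vCp] := C_pivotalP.
rewrite lt_def (W_noninc (ltnW lt_ij)) andbT; apply/eqP => eqW.
have ip : i != p by rewrite -val_eqE neq_ltn (leq_trans lt_ij) //; rewrite inE in jP.
have jCi : j \notin C :\ i by rewrite !inE negb_and jC orbT.
pose X := j |: (C :\ i).
have wX : wsum W X = wsum W C by rewrite wsumU1 // (wsumD1 W iC) eqW.
have pX : p \in X by rewrite !inE (eq_sym p j) (negbTE jp) (eq_sym p i) ip pC.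
have XU : X \in p_pivotal.
  rewrite inE pX subUset sub1set jP (subset_trans (subD1set C i)) //= vW wX -vW vC /=.
  move: vCp; rewrite !vW -(lerD2l (W p)) -(wsumD1 W pC) -wX (wsumD1 W pX).
  by rewrite lerD2l.
have := C_max XU wX; rewrite /index_sum big_setU1 //= [X in (_ <= X)%N](big_setD1 i) //=.
by rewrite leq_add2r leqNgt lt_ij.
Qed.

Lemma generated_by_others S :
  [exists T in Wmin v :\ C, T \subset S] = v (S :&: P) && (S :&: P != C).
Proof.
apply/exists_inP/andP => [[T /setD1P[TC TW] sTS] | [vSP SPC]].
  have sTSP : T \subset S :&: P by rewrite subsetI sTS Wmin_sub_P.
  split; first exact: v_mono sTSP (Wmin_winning TW).
  apply: contraNneq TC => SPC; apply/eqP; rewrite SPC in sTSP.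
  exact: (Wmin_antichain v_mono TW C_Wmin sTSP).
have sSPS : S :&: P \subset S := subsetIl S P.
have [T TW sTSP] := Wmin_below vSP.
have [TC|TC] := eqVneq T C; last first.
  by exists T; [rewrite in_setD1 TC | apply: subset_trans sTSP sSPS].
have /subsetPn[i iSP iC] : ~~ (S :&: P \subset C).
  by apply: contra SPC => sSPC; rewrite eqEsubset sSPC -TC.
have [sCP pC vC vCp] := C_pivotalP.
have ip : i != p by apply: contraNneq iC => ->.
have iCp : i \notin C :\ p by rewrite !inE negb_and iC orbT.
have vX : v (i |: (C :\ p)).
  have le_pi : W p <= W i by apply: W_noninc; move: iSP; rewrite !inE => /andP[].
  by move: vC; rewrite !vW wsumU1 // (wsumD1 W pC); lra.
have [T' T'W sT'X] := Wmin_below vX.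
exists T'; first rewrite in_setD1 T'W andbT.
  apply/eqP => T'C; have := subsetP sT'X p; rewrite T'C pC !inE eqxx eq_sym.
  by rewrite (negbTE ip) => /(_ isT).
apply: subset_trans sT'X _; rewrite subUset sub1set (subsetP sSPS _ iSP).
by rewrite (subset_trans (subD1set C p)) // -TC (subset_trans sTSP).
Qed.

Variable gap : R.
Hypothesis gap_gt0 : 0 < gap.
Hypothesis gap_sums : forall S T, wsum W S < wsum W T -> wsum W S + gap <= wsum W T.
Hypothesis gap_quota : forall S, wsum W S < q -> wsum W S + gap <= q.

Let e := wsum W C - q.
Let eta := gap / n.+1%:R.

Lemma eta_gt0 : 0 < eta.
Proof. by rewrite divr_gt0 // ltr0n. Qed.

Lemma eta_card_lt_gap S : eta * #|S|%:R < gap.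
Proof.
rewrite mulrAC ltr_pdivrMr ?ltr0n // ltr_pM2l // ltr_nat ltnS.
by rewrite -[X in (_ <= X)%N]card_ord max_card.
Qed.

Lemma eta_le_gap : eta <= gap.
Proof. by have := eta_card_lt_gap [set p]; rewrite cards1 mulr1 => /ltW. Qed.

Lemma e_ge0 : 0 <= e.
Proof. by have [_ _ vC _] := C_pivotalP; move: vC; rewrite vW subr_ge0. Qed.

Lemma e_gap_le_Wp : e + gap <= W p.
Proof.
have [_ pC _ vCp] := C_pivotalP.
by move: vCp; rewrite vW -ltNge => /gap_quota; rewrite /e (wsumD1 W pC); lra.
Qed.

Definition W' i :=
  if i \in P then W i + (if i \in C then 0 else eta) - (if i == p then e + eta else 0)
  else 0.

Lemma wsum_W'_setIP S : wsum W' S = wsum W' (S :&: P).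
Proof.
rewrite /wsum [LHS](big_setID P) /= [X in _ + X]big1 ?addr0 // => i.
by rewrite inE => /andP[iP _]; rewrite /W' (negbTE iP).
Qed.

Lemma wsum_W' S : S \subset P ->
  wsum W' S = wsum W S + eta * #|S :\: C|%:R - (if p \in S then e + eta else 0).
Proof.
move=> sSP; rewrite /wsum (eq_bigr (fun i => W i + (if i \in C then 0 else eta)
  - (if i == p then e + eta else 0))); last by move=> i /(subsetP sSP) iP; rewrite /W' iP.
rewrite sumrB big_split /=; congr (_ + _ - _).
  rewrite (big_setID C) /= big1 ?add0r => [|i]; last by rewrite inE => /andP[_ ->].
  rewrite mulr_natr -sumr_const; apply: eq_bigr => i.
  by rewrite inE => /andP[/negbTE ->].
rewrite -big_mkcondr; have [pS|pS] := boolP (p \in S).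
  rewrite (eq_bigl (pred1 p)) ?big_pred1_eq // => i /=.
  by case: eqVneq => [->|]; rewrite ?pS ?andbF.
by rewrite big_pred0 // => i; case: eqVneq => [->|]; rewrite ?(negbTE pS) ?andbF.
Qed.

Lemma W'_losing S : S \subset P -> ~~ v S -> wsum W' S < q.
Proof.
move=> sSP; rewrite vW -ltNge => /gap_quota lt_q; rewrite wsum_W' //.
have := eta_card_lt_gap (S :\: C); have := e_ge0; have := eta_gt0.
by case: ifP => _; lra.
Qed.

Lemma W'_C : wsum W' C = q - eta.
Proof.
have [sCP pC _ _] := C_pivotalP.
by rewrite wsum_W' // setDv cards0 mulr0 addr0 pC /e; lra.
Qed.

Lemma W'_winning S : S \subset P -> v S -> S != C -> q <= wsum W' S.
Proof.
move=> sSP vS SC; rewrite wsum_W' //.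
have eta_k : 0 <= eta * #|S :\: C|%:R by rewrite mulr_ge0 ?ler0n // ltW ?eta_gt0.
have := e_gap_le_Wp; have := eta_le_gap.
have [pS|pS] := boolP (p \in S); last by move: vS; rewrite vW; lra.
have [vSp|vSp] := boolP (v (S :\ p)).
  by move: vSp; rewrite vW (wsumD1 W pS); lra.
have SU : S \in p_pivotal by rewrite inE sSP pS vS vSp.
have := C_min SU; rewrite le_eqVlt => /orP[/eqP eq_CS | /gap_sums lt_CS]; last first.
  by rewrite /e; lra.
have /subsetPn[i iS iC] : ~~ (S \subset C).
  apply: contra SC => sSC; apply/eqP.
  exact: (Wmin_antichain v_mono (pivotal_lightest_Wmin SU (esym eq_CS)) C_Wmin sSC).
have : eta <= eta * #|S :\: C|%:R.
  rewrite ler_pMr ?eta_gt0 // ler1n card_gt0; apply/set0Pn.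
  by exists i; rewrite inE iC.
by rewrite /e -eq_CS; lra.
Qed.

Lemma W'_win S : (q <= wsum W' S) = v (S :&: P) && (S :&: P != C).
Proof.
rewrite wsum_W'_setIP; have sSP := subsetIr S P.
have [vSP|vSP] /= := boolP (v (S :&: P)); last by apply/negbTE; rewrite -ltNge W'_losing.
have [->|SPC] := eqVneq (S :&: P) C; last exact: W'_winning.
by apply/negbTE; rewrite -ltNge W'_C; have := eta_gt0; lra.
Qed.

Lemma W'_ge0 i : 0 <= W' i.
Proof.
rewrite /W'; case: ifP => // iP; have := W_ge0 i; have := eta_gt0.
case: eqVneq => [->|_]; last by case: ifP => _; lra.
by have [_ -> _ _] := C_pivotalP; have := e_gap_le_Wp; have := eta_le_gap; lra.
Qed.

Lemma W'_noninc : nonincreasing_weights W'.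
Proof.
move=> i j le_ij; have [jP|jP] := boolP (j \in P); last first.
  by rewrite {1}/W' (negbTE jP); apply: W'_ge0.
have iP : i \in P by move: jP; rewrite !inE => /(leq_trans le_ij).
have [_ pC _ _] := C_pivotalP; have := eta_gt0; have := eta_le_gap; have := W_noninc le_ij.
have [jp|jp] := eqVneq j p.
  rewrite /W' iP jP jp pC eqxx; have := e_ge0.
  by case: eqVneq => [->|_]; [rewrite pC; lra | case: ifP => _; lra].
have lt_jp : (j < p)%N by move: jP; rewrite inE ltn_neqAle val_eqE jp.
have ip : i != p by rewrite -val_eqE neq_ltn (leq_ltn_trans le_ij lt_jp).
rewrite /W' iP jP (negbTE jp) (negbTE ip) !subr0.
have [lt_W|eq_W] : W j < W i \/ W j = W i.
  by move: (W_noninc le_ij); rewrite le_eqVlt => /orP[/eqP|]; [right|left].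
- have := gap_sums (S := [set j]) (T := [set i]); rewrite !wsum1 => /(_ lt_W).
  by case: ifP => _; case: ifP => _; lra.
- case: (boolP (i \in C)) => iC; case: (boolP (j \in C)) => jC; try lra.
  have lt_ij : (i < j)%N.
    by rewrite ltn_neqAle le_ij andbT val_eqE; apply: contraNneq jC => <-.
  by have := C_tie_break lt_ij jP jp iC jC; lra.
Qed.

Lemma canonical_without_C : exists v' : simple_game n, canonical_wvg v' /\ Wmin v' = Wmin v :\ C.
Proof.
exists (fun S => q <= wsum W' S); split.
  split; first by exists q, W'; do !split => //; apply: W'_ge0.
  move=> i j ij; apply: (desir_of_weights (q := q)) => //.
  by apply: W'_noninc; rewrite -ij.
apply: (Wmin_generated v_mono) => [|S]; first exact: subD1set.
by rewrite W'_win generated_by_others.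
Qed.

End RemoveCoalition.

Lemma canonical_without_some_Wmin n (v : simple_game n) (q : R) (W : 'I_n -> R) :
  0 <= q -> (forall i, 0 <= W i) -> nonincreasing_weights W -> weighted_by v q W ->
  ~~ v set0 -> Wmin v != set0 ->
  exists C, C \in Wmin v /\
    exists v' : simple_game n, canonical_wvg v' /\ Wmin v' = Wmin v :\ C.
Proof.
move=> q_ge0 W_ge0 W_noninc vW v0 /set0Pn[T0 T0W].
have /set0Pn[i0 i0T0] : T0 != set0 by apply: contraNneq v0 => <-; apply: Wmin_winning.
pose used i := [exists T in Wmin v, i \in T].
have used_i0 : used i0 by apply/exists_inP; exists T0.
case: (arg_maxnP val (P := used) used_i0) => p /exists_inP[Tp TpW pTp] p_max.
have Wmin_sub_P T : T \in Wmin v -> T \subset [set i : 'I_n | (i <= p)%N].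
  by move=> TW; apply/subsetP => i iT; rewrite inE; apply: p_max; apply/exists_inP; exists T.
have TpU : Tp \in p_pivotal v p.
  move: (TpW); rewrite [in X in X -> _]inE => /andP[vTp /forall_inP minTp].
  by rewrite inE Wmin_sub_P // pTp vTp minTp.
case: (arg_minP (wsum W) (P := mem (p_pivotal v p)) TpU) => C1 C1U C1_min.
pose tie S := (S \in p_pivotal v p) && (wsum W S == wsum W C1).
have tie_C1 : tie C1 by rewrite /tie eqxx andbT; exact: C1U.
case: (arg_maxnP (@index_sum n) tie_C1) => C /andP[CU /eqP CC1] C_max.
have C_min S : S \in p_pivotal v p -> wsum W C <= wsum W S by rewrite CC1; apply: C1_min.
exists C; split; first exact: C_Wmin CU C_min.
(* One gap serves all weight sums and the quota, the latter encoded as [None]. *)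
have [gap gap_gt0 gap_val] :=
  exists_gap (fun X : option {set 'I_n} => if X is Some A then wsum W A else q).
apply: (canonical_without_C q_ge0 W_ge0 W_noninc vW Wmin_sub_P CU C_min _ gap_gt0).
- by move=> S SU eq_SC; apply: C_max; rewrite /tie SU eq_SC CC1 eqxx.
- by move=> S T; apply: (gap_val (Some S) (Some T)).
- by move=> S; apply: (gap_val (Some S) None).
Qed.

Lemma canonical_losing n : canonical_wvg (fun _ : {set 'I_n} => false).
Proof.
split=> [|//]; exists 1, (fun=> 0); split; first exact: ler01.
by split=> // S; rewrite big1 // ler10.
Qed.

Theorem lemma4 (n : nat) (v : simple_game n) :
  (1 <= n)%N -> canonical_wvg v -> Wmin v != set0 ->
  exists C : {set 'I_n}, C \in Wmin v /\
    exists v' : simple_game n, canonical_wvg v' /\ Wmin v' = Wmin v :\ C.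
Proof.
move=> _ canon Wv_neq0.
have [q [W [q_ge0 W_ge0 W_noninc vW]]] := canonical_nonincreasing_weights canon.
have [v0|v0] := boolP (v set0); last exact: canonical_without_some_Wmin vW v0 Wv_neq0.
have -> := Wmin_set0 (weighted_monotone W_ge0 vW) v0.
exists set0; split; first exact: set11.
exists (fun _ => false); split; first exact: canonical_losing.
by rewrite setDv; apply/setP => S; rewrite !inE /minimal_winning.
Qed.
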